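(* Let $F\subset\mathbb{R}^2_{\geq}$ be a compact convex polygon with vertices $P_1,\dots,P_n$ ordered clockwise, and let $\tau_1$ be the extremal ray of $L_{\mathbb{Q}_{\geq}}(F)$ with the greater slope. Suppose $\tau_1\cap F=\{P_1\}$. For $i\in\mathbb{N}$, let $V_i$ denote the intersection point of the segments $\overline{(iP_1)(iP_2)}$ and $\overline{((i+1)P_n)((i+1)P_1)}$, whenever these segments intersect. Then there is a line parallel to $\tau_1$ containing every such point $V_i$.
   Context: $\mathbb{N}=\{0,1,2,\dots\}$; $\overline{XY}$ is the closed segment from $X$ to $Y$. For $A\subseteq\mathbb{R}^2_{\geq}$, $L_{\mathbb{Q}_{\geq}}(A)=\{\sum_{i=1}^p q_ia_i\mid p\in\mathbb{N},\ q_i\in\mathbb{Q}_{\geq},\ a_i\in A\}$ and its extremal rays are its two boundary half-lines from the origin. *)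

From HB Require Import structures.
From mathcomp Require Import all_boot all_order all_algebra.
From mathcomp Require Import reals.
Set Implicit Arguments. Unset Strict Implicit. Unset Printing Implicit Defensive.
Import Order.TTheory GRing.Theory Num.Theory.
Local Open Scope ring_scope.

Section Geom.
Variable R : realType.
Definition pt := (R * R)%type.

Definition padd (x y : pt) : pt := (x.1 + y.1, x.2 + y.2).
Definition psub (x y : pt) : pt := (x.1 - y.1, x.2 - y.2).
Definition pscale (a : R) (x : pt) : pt := (a * x.1, a * x.2).
(* cross u x <= 0  iff x lies clockwise of (on the right of) u *)
Definition cross (u x : pt) : R := u.1 * x.2 - u.2 * x.1.

Definition seg (X Y : pt) : pt -> Prop :=
  fun Z => exists s : R, 0 <= s <= 1 /\ Z = padd (pscale (1 - s) X) (pscale s Y).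

Definition ray (u : pt) : pt -> Prop :=
  fun x => exists t : R, 0 <= t /\ x = pscale t u.

Definition LQ (A : pt -> Prop) : pt -> Prop :=
  fun x => exists s : seq (rat * pt),
    (forall qa, qa \in s -> 0 <= qa.1 /\ A qa.2) /\
    x = foldr padd (0, 0) [seq pscale (ratr qa.1) qa.2 | qa <- s].

(* ray u is the boundary half-line of L_{Q>=}(A) with the greater slope:
   it lies in the closure of the cone and the whole cone is on its
   clockwise (lower-slope) side. *)
Definition upper_extremal_ray (A : pt -> Prop) (u : pt) : Prop :=
  u != (0, 0) /\
  (forall x, LQ A x -> cross u x <= 0) /\
  (forall t e : R, 0 <= t -> 0 < e -> exists x, LQ A x /\
      `|x.1 - t * u.1| < e /\ `|x.2 - t * u.2| < e).

Definition nxt (n i : nat) : nat := if i == n then 1%N else i.+1.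

(* P 1, ..., P n are the vertices of a (nondegenerate) compact convex polygon
   listed clockwise: every other vertex lies strictly to the right of each
   directed edge P_i -> P_(i+1). *)
Definition clockwise_convex_polygon (n : nat) (P : nat -> pt) : Prop :=
  (3 <= n)%N /\
  forall i j, (1 <= i <= n)%N -> (1 <= j <= n)%N -> j != i -> j != nxt n i ->
    cross (psub (P (nxt n i)) (P i)) (psub (P j) (P i)) < 0.

Definition hull (n : nat) (P : nat -> pt) : pt -> Prop :=
  fun x => exists w : nat -> R,
    (forall j, 0 <= w j) /\ \sum_(1 <= j < n.+1) w j = 1 /\
    x.1 = \sum_(1 <= j < n.+1) w j * (P j).1 /\
    x.2 = \sum_(1 <= j < n.+1) w j * (P j).2.

Definition in_quadrant (x : pt) : Prop := 0 <= x.1 /\ 0 <= x.2.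
End Geom.

From HB Require Import structures.
From mathcomp Require Import all_boot all_order all_algebra.
From mathcomp Require Import reals.
From mathcomp Require Import ring.
Set Implicit Arguments. Unset Strict Implicit. Unset Printing Implicit Defensive.
Import Order.TTheory GRing.Theory Num.Theory.
Local Open Scope ring_scope.

(* Write d1 = P_2 - P_1 and d2 = P_n - P_1. A point of both scaled edges is
   V = i P_1 + a d1 = (i+1) P_1 + b d2, so P_1 = a d1 - b d2, and taking the
   cross product with d2 shows that a = cross P_1 d2 / cross d1 d2 does not
   depend on i. Since tau_1 passes through P_1, cross u P_1 = 0, hence
   cross u V_i = a * cross u d1 is the same for every i: all V_i lie on one
   line parallel to tau_1. *)

Section Cross.
Variable R : realType.
Implicit Types (a k : R) (x y z : pt R).

Lemma cross_paddl x y z : cross (padd x y) z = cross x z + cross y z.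
Proof. by rewrite /cross /=; ring. Qed.

Lemma cross_paddr x y z : cross x (padd y z) = cross x y + cross x z.
Proof. by rewrite /cross /=; ring. Qed.

Lemma cross_pscalel a x y : cross (pscale a x) y = a * cross x y.
Proof. by rewrite /cross /=; ring. Qed.

Lemma cross_pscaler a x y : cross x (pscale a y) = a * cross x y.
Proof. by rewrite /cross /=; ring. Qed.

Lemma cross_self x : cross x x = 0.
Proof. by rewrite /cross mulrC subrr. Qed.

Lemma cross_ray u x : ray u x -> cross u x = 0.
Proof. by move=> [t [_ ->]]; rewrite cross_pscaler cross_self mulr0. Qed.

Lemma seg_sym x y z : seg x y z -> seg y x z.
Proof.
move=> [s [/andP[s0 s1] ->]]; exists (1 - s); split.
  by rewrite subr_ge0 s1 lerBlDr lerDl s0.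
by rewrite /padd /=; congr (_, _); ring.
Qed.

Lemma seg_pscale_affine k x y z :
  seg (pscale k x) (pscale k y) z ->
  exists a, z = padd (pscale k x) (pscale a (psub y x)).
Proof.
by move=> [s [_ ->]]; exists (k * s); rewrite /padd /pscale /=; congr (_, _); ring.
Qed.

Lemma meet_coef k x d1 d2 a b :
  cross d1 d2 != 0 ->
  padd (pscale k x) (pscale a d1) = padd (pscale (k + 1) x) (pscale b d2) ->
  a = cross x d2 / cross d1 d2.
Proof.
move=> D0 /(congr1 (fun y => cross y d2)).
rewrite !cross_paddl !cross_pscalel cross_self mulr0 addr0 mulrDl mul1r.
by move=> /addrI <-; rewrite mulfK.
Qed.

End Cross.

Lemma clockwise_convex_polygon_corner1 (R : realType) n (P : nat -> pt R) :
  clockwise_convex_polygon n P ->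
  cross (psub (P 2%N) (P 1%N)) (psub (P n) (P 1%N)) < 0.
Proof.
move=> [n3 Hpol]; have n_gt1 : (1 < n)%N := ltnW n3.
have nxt1 : nxt n 1 = 2%N by rewrite /nxt ltn_eqF.
have n_gt0 : (0 < n)%N := ltnW n_gt1.
rewrite -nxt1; apply: Hpol; rewrite ?nxt1 ?leqnn ?n_gt0 ?(ltnW n_gt1) //;
  by rewrite gtn_eqF.
Qed.

Theorem lemma3p2 (R : realType) (n : nat) (P : nat -> pt R) (u : pt R) :
  clockwise_convex_polygon n P ->
  (forall j, (1 <= j <= n)%N -> in_quadrant (P j)) ->
  upper_extremal_ray (hull n P) u ->
  (forall x, (hull n P x /\ ray u x) <-> x = P 1%N) ->
  exists c : R, forall (i : nat) (V : pt R),
    seg (pscale i%:R (P 1%N)) (pscale i%:R (P 2%N)) V ->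
    seg (pscale i.+1%:R (P n)) (pscale i.+1%:R (P 1%N)) V ->
    cross u V = c.
Proof.
move=> /clockwise_convex_polygon_corner1 D_lt0 _ _ tau1F.
have uP1 : cross u (P 1%N) = 0 by apply/cross_ray; case: (tau1F (P 1%N)) => _ [].
set d1 := psub (P 2%N) (P 1%N); set d2 := psub (P n) (P 1%N).
exists (cross (P 1%N) d2 / cross d1 d2 * cross u d1) => i V V_e1 V_en.
have [a Va] := seg_pscale_affine V_e1.
have [b Vb] := seg_pscale_affine (seg_sym V_en).
rewrite -addn1 natrD in Vb.
have a_eq : a = cross (P 1%N) d2 / cross d1 d2.
  by apply: (meet_coef (k := i%:R) (b := b)); [rewrite lt_eqF | rewrite -Vb Va].
by rewrite Va a_eq cross_paddr !cross_pscaler uP1 mulr0 add0r.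
Qed.
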